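(* Let $X\subset\mathbb{P}^{n+1}$ be a smooth cubic hypersurface over $\mathbb{Q}$ with $n\ge3$. Let $P\in X(\mathbb{Q})$ be a non-Eckardt point and let $Q\in X_P(\mathbb{Q})$ with $T_Q X\ne T_P X$. Then $Q\in\operatorname{Span}(P)$.
   Context: $T_P X$ is the tangent hyperplane to $X$ at $P$ and $X_P:=X\cap T_P X$. A point $P\in X$ is an Eckardt point if $X_P$ is a cone with vertex $P$. For $S\subseteq X(\mathbb{Q})$, define $S=S_0\subseteq S_1\subseteq\cdots$ by letting $S_{k+1}$ be the set of $R\in X(\mathbb{Q})$ with either $R\in S_k$ or $\ell\cdot X=P+Q+R$ for some $\mathbb{Q}$-line $\ell\not\subset X$ and some $P,Q\in S_k$ (possibly equal); $\operatorname{Span}(S)=\bigcup_kS_k$ and $\operatorname{Span}(P)=\operatorname{Span}(\{P\})$. *)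

From HB Require Import structures.
From mathcomp Require Import all_boot all_order all_algebra all_field.
Set Implicit Arguments. Unset Strict Implicit. Unset Printing Implicit Defensive.
Import GRing.Theory Num.Theory.
Local Open Scope ring_scope.

(* A cubic form F(x) = sum_{i,j,k} c i j k x_i x_j x_k with rational coefficients. *)
Definition coeffs (m : nat) := 'I_m -> 'I_m -> 'I_m -> rat.

Definition cubF (R : fieldType) (m : nat) (c : coeffs m) (x : 'rV[R]_m) : R :=
  \sum_(i < m) \sum_(j < m) \sum_(k < m) ratr (c i j k) * x 0 i * x 0 j * x 0 k.

Definition gradF (R : fieldType) (m : nat) (c : coeffs m) (x : 'rV[R]_m) (l : 'I_m) : R :=
  \sum_(i < m) \sum_(j < m) \sum_(k < m) ratr (c i j k) *
    ((i == l)%:R * x 0 j * x 0 k + x 0 i * (j == l)%:R * x 0 k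
     + x 0 i * x 0 j * (k == l)%:R).

Definition tangent (R : fieldType) (m : nat) (c : coeffs m) (P x : 'rV[R]_m) : bool :=
  \sum_(l < m) gradF c P l * x 0 l == 0.

Definition smooth (m : nat) (c : coeffs m) : Prop :=
  forall x : 'rV[algC]_m, x != 0 -> exists l, gradF c x l != 0.

Definition onX (m : nat) (c : coeffs m) (x : 'rV[rat]_m) : Prop :=
  x != 0 /\ cubF c x = 0.

Definition proj_eq (R : fieldType) (m : nat) (x y : 'rV[R]_m) : Prop :=
  exists k : R, k != 0 /\ x = k *: y.

Definition toC (m : nat) (x : 'rV[rat]_m) : 'rV[algC]_m := map_mx ratr x.

(* P is an Eckardt point: X_P = X ∩ T_P X is a cone with vertex P, i.e. for
   every (geometric) point R of X_P, the line through P and R lies in X_P. *)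
Definition eckardt (m : nat) (c : coeffs m) (P : 'rV[rat]_m) : Prop :=
  forall R : 'rV[algC]_m, R != 0 -> cubF c R = 0 -> tangent c (toC P) R ->
    forall a b : algC,
      cubF c (a *: toC P + b *: R) = 0 /\ tangent c (toC P) (a *: toC P + b *: R).

(* There is a Q-line l (spanned by independent rational U, V), not contained
   in X, with l . X = P + Q + R as divisors: F restricted to l factors as
   k * L_P * L_Q * L_R with k <> 0, where L_S is the linear form in the line
   parameters (a:b) vanishing at the parameter of S. *)
Definition line_third (m : nat) (c : coeffs m) (P Q R : 'rV[rat]_m) : Prop :=
  exists U V : 'rV[rat]_m,
    (forall a b : rat, a *: U + b *: V = 0 -> a = 0 /\ b = 0) /\
    exists p1 p2 q1 q2 r1 r2 k : rat,
      [/\ proj_eq P (p1 *: U + p2 *: V), proj_eq Q (q1 *: U + q2 *: V),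
          proj_eq R (r1 *: U + r2 *: V), k != 0 &
          forall a b : rat, cubF c (a *: U + b *: V) =
            k * (p2 * a - p1 * b) * (q2 * a - q1 * b) * (r2 * a - r1 * b)].

Inductive span (m : nat) (c : coeffs m) (S : 'rV[rat]_m -> Prop) : 'rV[rat]_m -> Prop :=
| span_base R : S R -> span c S R
| span_step P Q R : span c S P -> span c S Q -> onX c R -> line_third c P Q R ->
    span c S R.

Definition spanP (m : nat) (c : coeffs m) (P : 'rV[rat]_m) : 'rV[rat]_m -> Prop :=
  span c (fun R => proj_eq R P).

From Pilot Require Import Defs.
From HB Require Import structures.
From mathcomp Require Import all_boot all_order all_algebra all_field.
From mathcomp Require Import ring.
From Stdlib Require Import Classical.
Set Implicit Arguments. Unset Strict Implicit. Unset Printing Implicit Defensive.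
Import GRing.Theory Num.Theory.
Local Open Scope ring_scope.

(* Write F(x) = T(x,x,x) with T the symmetric trilinear polar form of F.
   If P is not on T_Q X, the line PQ meets X in 2P + Q.  Otherwise take a
   rational S on T_P X: the line PS meets X again in a point A, the line AQ
   meets X again in a point B, and Q is the third point of X on the line AB.
   The tangent lines at A and at B pass through P as soon as q_P(S) = 3T(P,S,S),
   l_Q(S) = 3T(Q,Q,S) and a certain quintic E(S) are nonzero, so then A, B and
   finally Q lie in Span(P).
   Rational points are Zariski dense, so if no such S existed the product
   l_Q q_P E would vanish on all of T_P X over algC.  Since T_Q X <> T_P X and
   P is not an Eckardt point, neither l_Q nor q_P vanishes identically on T_P X,
   so E does.  This forces the tangent hyperplane at an explicit point x(y)
   to contain T_P X for every y on T_P X.  Letting y run along a line whose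
   direction lies in T_P X, off the plane of P and Q (possible as n >= 3), x(y)
   traces a conic, and a suitable point of it is a singular point of X. *)

Section Polar.
Variables (R : numFieldType) (m : nat) (c : coeffs m).
Implicit Types (a b : R) (x y z U V W : 'rV[R]_m).

Definition trilin x y z : R :=
  \sum_(i < m) \sum_(j < m) \sum_(k < m) ratr (c i j k) * x 0 i * y 0 j * z 0 k.

Definition polar x y z : R :=
  (trilin x y z + trilin x z y + trilin y x z + trilin y z x + trilin z x y
   + trilin z y x) / 6.

Local Ltac trilin_pointwise :=
  rewrite /trilin ?mulr_sumr -?big_split; apply: eq_bigr => i _;
  rewrite ?mulr_sumr -?big_split; apply: eq_bigr => j _;
  rewrite ?mulr_sumr -?big_split; apply: eq_bigr => k _; rewrite !mxE /=; ring.

Lemma trilinD1 x x' y z : trilin (x + x') y z = trilin x y z + trilin x' y z.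
Proof. trilin_pointwise. Qed.
Lemma trilinD2 x y y' z : trilin x (y + y') z = trilin x y z + trilin x y' z.
Proof. trilin_pointwise. Qed.
Lemma trilinD3 x y z z' : trilin x y (z + z') = trilin x y z + trilin x y z'.
Proof. trilin_pointwise. Qed.
Lemma trilinZ1 a x y z : trilin (a *: x) y z = a * trilin x y z.
Proof. trilin_pointwise. Qed.
Lemma trilinZ2 a x y z : trilin x (a *: y) z = a * trilin x y z.
Proof. trilin_pointwise. Qed.
Lemma trilinZ3 a x y z : trilin x y (a *: z) = a * trilin x y z.
Proof. trilin_pointwise. Qed.

Lemma polarC12 x y z : polar x y z = polar y x z.
Proof. by rewrite /polar; congr (_ / _); ring. Qed.
Lemma polarC23 x y z : polar x y z = polar x z y.
Proof. by rewrite /polar; congr (_ / _); ring. Qed.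
Lemma polarC13 x y z : polar x y z = polar z y x.
Proof. by rewrite /polar; congr (_ / _); ring. Qed.

Lemma polarD1 x x' y z : polar (x + x') y z = polar x y z + polar x' y z.
Proof. by rewrite /polar !(trilinD1, trilinD2, trilinD3); ring. Qed.
Lemma polarZ1 a x y z : polar (a *: x) y z = a * polar x y z.
Proof. by rewrite /polar !(trilinZ1, trilinZ2, trilinZ3); ring. Qed.
Lemma polarD2 x y y' z : polar x (y + y') z = polar x y z + polar x y' z.
Proof. by rewrite polarC12 polarD1 polarC12 (polarC12 y'). Qed.
Lemma polarZ2 a x y z : polar x (a *: y) z = a * polar x y z.
Proof. by rewrite polarC12 polarZ1 polarC12. Qed.
Lemma polarD3 x y z z' : polar x y (z + z') = polar x y z + polar x y z'.
Proof. by rewrite polarC13 polarD1 polarC13 (polarC13 z'). Qed.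
Lemma polarZ3 a x y z : polar x y (a *: z) = a * polar x y z.
Proof. by rewrite polarC13 polarZ1 polarC13. Qed.
Lemma polarB3 x y z z' : polar x y (z - z') = polar x y z - polar x y z'.
Proof. by rewrite polarD3 -scaleN1r polarZ3 mulN1r. Qed.
Lemma polar0_1 y z : polar 0 y z = 0.
Proof. by rewrite -(scale0r 0) polarZ1 mul0r. Qed.
Lemma polar0_2 x z : polar x 0 z = 0.
Proof. by rewrite -(scale0r 0) polarZ2 mul0r. Qed.
Lemma polar0_3 x y : polar x y 0 = 0.
Proof. by rewrite -(scale0r 0) polarZ3 mul0r. Qed.

Lemma polar_sum_delta x y z :
  polar x y z = \sum_(i < m) z 0 i * polar x y 'e_i.
Proof.
rewrite {1}(row_sum_delta z) (big_morph (polar x y) (polarD3 x y) (polar0_3 x y)).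
by apply: eq_bigr => i _; rewrite polarZ3.
Qed.

Lemma polar_comb1 a b U V y z :
  polar (a *: U + b *: V) y z = a * polar U y z + b * polar V y z.
Proof. by rewrite polarD1 !polarZ1. Qed.
Lemma polar_comb3 a b U V x y :
  polar x y (a *: U + b *: V) = a * polar x y U + b * polar x y V.
Proof. by rewrite polarD3 !polarZ3. Qed.
Lemma polar_comb_sq a b U V W :
  polar (a *: U + b *: V) (a *: U + b *: V) W =
  a ^+ 2 * polar U U W + 2 * a * b * polar U V W + b ^+ 2 * polar V V W.
Proof. by rewrite !(polarD1, polarD2, polarZ1, polarZ2) (polarC12 V U W); ring. Qed.
Lemma polar_comb_cube a b U V :
  polar (a *: U + b *: V) (a *: U + b *: V) (a *: U + b *: V) =
  a ^+ 3 * polar U U U + 3 * a ^+ 2 * b * polar U U V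
  + 3 * a * b ^+ 2 * polar U V V + b ^+ 3 * polar V V V.
Proof.
rewrite !(polarD1, polarD2, polarD3, polarZ1, polarZ2, polarZ3).
by rewrite (polarC23 U V U) (polarC13 V U U) (polarC12 V U V) (polarC13 V V U); ring.
Qed.

Lemma cubF_polar x : cubF c x = polar x x x.
Proof. by rewrite /polar /cubF -/(trilin x x x); field. Qed.

Lemma sum_delta_nat (f : 'I_m -> R) i : \sum_(l < m) (i == l)%:R * f l = f i.
Proof.
rewrite (bigD1 i) //= eqxx mul1r big1 ?addr0 // => l /negbTE.
by rewrite eq_sym => ->; rewrite mul0r.
Qed.

Lemma gradF_polar x y : \sum_(l < m) gradF c x l * y 0 l = 3 * polar x x y.
Proof.
have -> : \sum_(l < m) gradF c x l * y 0 l = trilin y x x + trilin x y x + trilin x x y.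
  rewrite /gradF /trilin.
  under eq_bigr => l _ do rewrite mulr_suml.
  rewrite exchange_big -!big_split /=; apply: eq_bigr => i _.
  under eq_bigr => l _ do rewrite mulr_suml.
  rewrite exchange_big -!big_split /=; apply: eq_bigr => j _.
  under eq_bigr => l _ do rewrite mulr_suml.
  rewrite exchange_big -!big_split /=; apply: eq_bigr => k _.
  rewrite (eq_bigr (fun l => (i == l)%:R * (ratr (c i j k) * x 0 j * x 0 k * y 0 l)
     + (j == l)%:R * (ratr (c i j k) * x 0 i * x 0 k * y 0 l)
     + (k == l)%:R * (ratr (c i j k) * x 0 i * x 0 j * y 0 l))); last first.
    by move=> l _; ring.
  by rewrite !big_split /= !sum_delta_nat; ring.
by rewrite /polar; field.
Qed.

Lemma gradF_delta x l : gradF c x l = 3 * polar x x 'e_l.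
Proof.
rewrite -gradF_polar (bigD1 l) //= mxE !eqxx mulr1 big1 ?addr0 // => k /negbTE kl.
by rewrite mxE kl andbF mulr0.
Qed.

Lemma tangent_polar x y : tangent c x y = (polar x x y == 0).
Proof. by rewrite /tangent gradF_polar mulf_eq0 pnatr_eq0. Qed.

End Polar.

Section RationalPoints.
Variables (m : nat) (c : coeffs m).
Implicit Types (x y z : 'rV[rat]_m).

Lemma toCZ (a : rat) x : toC (a *: x) = ratr a *: toC x.
Proof. by apply/rowP => i; rewrite !mxE rmorphM. Qed.
Lemma toCB x y : toC (x - y) = toC x - toC y.
Proof. by apply/rowP => i; rewrite !mxE rmorphB. Qed.

Lemma trilin_toC x y z : trilin c (toC x) (toC y) (toC z) = ratr (trilin c x y z).
Proof.
rewrite /trilin rmorph_sum; apply: eq_bigr => i _; rewrite rmorph_sum.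
apply: eq_bigr => j _; rewrite rmorph_sum; apply: eq_bigr => k _.
by rewrite 3!rmorphM !mxE fmorph_rat.
Qed.

Lemma polar_toC x y z : polar c (toC x) (toC y) (toC z) = ratr (polar c x y z).
Proof. by rewrite /polar fmorph_div rmorph_nat !rmorphD !trilin_toC. Qed.

Lemma gradF_toC x l : gradF c (toC x) l = ratr (gradF c x l).
Proof.
rewrite /gradF rmorph_sum; apply: eq_bigr => i _; rewrite rmorph_sum.
apply: eq_bigr => j _; rewrite rmorph_sum; apply: eq_bigr => k _.
by rewrite rmorphM fmorph_rat !(rmorphM, rmorphD) !mxE !rmorph_nat.
Qed.

Lemma smooth_polar_rat x : smooth c -> x != 0 -> exists j, polar c x x 'e_j != 0.
Proof.
move=> sm x0; have x0C : toC x != 0 by rewrite map_mx_eq0.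
have [l] := sm _ x0C.
by rewrite gradF_toC fmorph_eq0 gradF_delta mulf_eq0 pnatr_eq0 => ?; exists l.
Qed.

End RationalPoints.

Section PolarForms.
Variables (R : numFieldType) (m : nat) (c : coeffs m).
Local Notation polar := (polar c).
Implicit Types (a : R) (P Q S v y : 'rV[R]_m).

Definition lform Q y := 3 * polar Q Q y.
Definition qform P y := 3 * polar P y y.

(* E(S) = 0 exactly when P lies on the tangent hyperplane at [thirdQ] below. *)
Definition Eform P Q y := lform Q y * qform P y ^+ 2
  - 6 * polar P Q y * qform Q y * qform P y + 36 * polar P Q y ^+ 2 * polar y y y.

(* If E vanishes on T_P X, the tangent hyperplane at [xpoint P Q y] contains
   T_P X for every y on T_P X. *)
Definition xpoint P Q y :=
  (2 * lform Q y * qform P y - 6 * polar P Q y * qform Q y) *: P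
  + (- 6 * polar P Q y * qform P y) *: Q + (36 * polar P Q y ^+ 2) *: y.

Lemma lform_shift Q y v a : lform Q (y + a *: v) = lform Q y + a * lform Q v.
Proof. by rewrite /lform polarD3 polarZ3; ring. Qed.
Lemma polar_shift P Q y v a : polar P Q (y + a *: v) = polar P Q y + a * polar P Q v.
Proof. by rewrite polarD3 polarZ3. Qed.
Lemma qform_shift P y v a :
  qform P (y + a *: v) = qform P y + 2 * a * (3 * polar P y v) + a ^+ 2 * qform P v.
Proof. by rewrite /qform !(polarD2, polarD3, polarZ2, polarZ3) (polarC23 c P v y); ring. Qed.
Lemma cube_shift y v a : polar (y + a *: v) (y + a *: v) (y + a *: v) =
  polar y y y + 3 * a * polar y y v + 3 * a ^+ 2 * polar y v v + a ^+ 3 * polar v v v.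
Proof.
rewrite !(polarD1, polarD2, polarD3, polarZ1, polarZ2, polarZ3).
by rewrite (polarC23 c y v y) (polarC13 c v y y) (polarC12 c v y v) (polarC13 c v v y); ring.
Qed.

(* The combination of the values E(y + k v), 0 <= k <= 5, is the derivative at
   t = 0 of the quintic t |-> E(y + t v). *)
Lemma xpoint_polar P Q y v :
  3 * polar (xpoint P Q y) (xpoint P Q y) v = (2 * lform Q y * qform P y
     - 6 * polar P Q y * qform Q y) ^+ 2 * (3 * polar P P v)
  + 36 * polar P Q y ^+ 2 * ((-137/60) * Eform P Q (y + 0%:R *: v)
     + 5 * Eform P Q (y + 1%:R *: v) - 5 * Eform P Q (y + 2%:R *: v)
     + (10/3) * Eform P Q (y + 3%:R *: v) - (5/4) * Eform P Q (y + 4%:R *: v)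
     + (1/5) * Eform P Q (y + 5%:R *: v))
  - 72 * polar P Q y * Eform P Q (y + 0%:R *: v) * polar P Q v.
Proof.
rewrite /Eform !(cube_shift, lform_shift, polar_shift, qform_shift).
rewrite /xpoint !(polarD1, polarD2, polarZ1, polarZ2).
rewrite (polarC12 c Q P v) (polarC12 c y P v) (polarC12 c y Q v) /lform /qform.
by field.
Qed.

Lemma polar_xpoint P Q y : polar P P Q = 0 -> polar Q Q P = 0 ->
  polar P Q (xpoint P Q y) = 36 * polar P Q y ^+ 3.
Proof.
move=> PQ QP; rewrite /xpoint !polarD3 !polarZ3 (polarC23 c P Q P) PQ.
by rewrite (polarC13 c P Q Q) QP; ring.
Qed.

End PolarForms.

Section Chords.
Variables (R : numFieldType) (m : nat) (c : coeffs m) (P Q S : 'rV[R]_m).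
Local Notation polar := (polar c).
Hypotheses (PPP : polar P P P = 0) (QQQ : polar Q Q Q = 0)
  (PPQ : polar P P Q = 0) (QQP : polar Q Q P = 0) (PPS : polar P P S = 0).

(* [thirdP] is the third point of X on the line PS, and [thirdQ] the third
   point of X on the line through [thirdP] and Q. *)
Definition thirdP := qform c P S *: S + (- polar S S S) *: P.
Definition kform := qform c Q S * qform c P S - 6 * polar P Q S * polar S S S.
Definition thirdQ := lform c Q S *: thirdP + (- kform) *: Q.

Lemma thirdP_tangent : polar P P thirdP = 0.
Proof. by rewrite /thirdP polar_comb3 PPS PPP !mulr0 addr0. Qed.

Lemma thirdP_cube : polar thirdP thirdP thirdP = 0.
Proof.
by rewrite /thirdP polar_comb_cube (polarC13 c S S P) (polarC13 c S P P) PPS PPP /qform; ring.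
Qed.

Lemma thirdP_polarP : 3 * polar thirdP thirdP P = qform c P S ^+ 3.
Proof.
by rewrite /thirdP polar_comb_sq (polarC13 c S S P) (polarC13 c S P P) PPS PPP /qform; ring.
Qed.

Lemma lform_thirdP : lform c Q thirdP = qform c P S * lform c Q S.
Proof. by rewrite /lform /thirdP polar_comb3 QQP; ring. Qed.

Lemma thirdP_polarQ : 3 * polar thirdP thirdP Q = qform c P S * kform.
Proof.
rewrite /thirdP polar_comb_sq (polarC13 c S S Q) (polarC13 c S P Q) (polarC12 c Q P S) PPQ.
by rewrite /kform /qform; ring.
Qed.

Lemma thirdP_thirdQ_cube a b :
  polar (a *: thirdP + b *: Q) (a *: thirdP + b *: Q) (a *: thirdP + b *: Q)
  = qform c P S * a * b * (kform * a + lform c Q S * b).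
Proof.
have h1 := thirdP_polarQ; have h2 := lform_thirdP; rewrite /lform in h2.
rewrite polar_comb_cube thirdP_cube QQQ (polarC13 c thirdP Q Q).
have -> : polar thirdP thirdP Q = qform c P S * kform / 3 by rewrite -h1; field.
have -> : polar Q Q thirdP = qform c P S * lform c Q S / 3 by rewrite -h2; field.
by field.
Qed.

Lemma thirdQ_tangent : polar P P thirdQ = 0.
Proof. by rewrite /thirdQ polar_comb3 thirdP_tangent PPQ !mulr0 addr0. Qed.

Lemma thirdQ_cube : polar thirdQ thirdQ thirdQ = 0.
Proof. by rewrite /thirdQ thirdP_thirdQ_cube; ring. Qed.

Lemma thirdQ_polarP : 3 * polar thirdQ thirdQ P = qform c P S * lform c Q S * Eform c P Q S.
Proof.
have h1 := thirdP_polarP.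
have h2 : polar thirdP Q P = qform c P S * polar P Q S.
  by rewrite /thirdP polar_comb1 (polarC13 c S Q P) (polarC23 c P Q P) PPQ; ring.
rewrite /thirdQ polar_comb_sq QQP h2.
have -> : polar thirdP thirdP P = qform c P S ^+ 3 / 3 by rewrite -h1; field.
by rewrite /Eform /kform; field.
Qed.

End Chords.

Section LinePoly.
Variables (R : numFieldType) (m : nat).
Implicit Types (f g : 'rV[R]_m -> R) (a b d : 'rV[R]_m).

Lemma poly_nat_eq0 (p : {poly R}) : (forall n : nat, p.[n%:R] = 0) -> p = 0.
Proof.
move=> p0; apply: (@roots_geq_poly_eq0 _ _ [seq i%:R | i <- iota 0 (size p)]).
- by apply/allP => _ /mapP [i _ ->]; rewrite /root p0.
- by rewrite map_inj_uniq ?iota_uniq // => i j /eqP; rewrite eqr_nat => /eqP.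
- by rewrite size_map size_iota.
Qed.

(* A substitute for polynomial maps, sufficient for the density and
   integral-domain arguments below. *)
Definition line_poly f :=
  forall a d, exists p : {poly R}, forall t, p.[t] = f (a + t *: d).

Lemma line_poly_const k : line_poly (fun _ => k).
Proof. by move=> a d; exists k%:P => t; rewrite hornerC. Qed.

Lemma line_poly_coord i : line_poly (fun y => y 0 i).
Proof.
move=> a d; exists ((a 0 i)%:P + (d 0 i)%:P * 'X) => t.
by rewrite !mxE !hornerE /=; ring.
Qed.

Lemma line_polyD f g : line_poly f -> line_poly g -> line_poly (fun y => f y + g y).
Proof.
move=> hf hg a d; have [p hp] := hf a d; have [q hq] := hg a d.
by exists (p + q) => t; rewrite hornerD hp hq.
Qed.

Lemma line_polyM f g : line_poly f -> line_poly g -> line_poly (fun y => f y * g y).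
Proof.
move=> hf hg a d; have [p hp] := hf a d; have [q hq] := hg a d.
by exists (p * q) => t; rewrite hornerM hp hq.
Qed.

Lemma line_polyN f : line_poly f -> line_poly (fun y => - f y).
Proof. by move=> hf a d; have [p hp] := hf a d; exists (- p) => t; rewrite hornerN hp. Qed.

Lemma line_polyX f k : line_poly f -> line_poly (fun y => f y ^+ k).
Proof.
move=> hf a d; have [p hp] := hf a d.
by exists (p ^+ k) => t; rewrite horner_exp hp.
Qed.

Lemma line_poly_sum (I : finType) (F : I -> 'rV[R]_m -> R) :
  (forall i, line_poly (F i)) -> line_poly (fun y => \sum_(i : I) F i y).
Proof.
move=> hF a d; elim: (index_enum I) => [|i s [p hp]].
  by exists 0 => t; rewrite horner0 big_nil.
have [q hq] := hF i a d.
by exists (q + p) => t; rewrite hornerD hq hp big_cons.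
Qed.

Lemma line_poly_comp f (phi : 'rV[R]_m -> 'rV[R]_m) : line_poly f ->
  (forall a d t, phi (a + t *: d) = phi a + t *: phi d) -> line_poly (f \o phi).
Proof. by move=> hf hphi a d; have [p hp] := hf (phi a) (phi d); exists p => t; rewrite /= hphi. Qed.

Lemma line_poly_mul_neq0 f g a b : line_poly f -> line_poly g ->
  f a != 0 -> g b != 0 -> exists t, f (a + t *: (b - a)) * g (a + t *: (b - a)) != 0.
Proof.
move=> hf hg fa gb; have [p hp] := hf a (b - a); have [q hq] := hg a (b - a).
have p0 : p != 0.
  by apply: contraNneq fa => p0; rewrite -[a]addr0 -(scale0r (b - a)) -hp p0 horner0.
have q0 : q != 0.
  by apply: contraNneq gb => q0; rewrite -[b](addrNK a) addrC -[b - a]scale1r -hq q0 horner0.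
have /eqP pq0 : p * q != 0 by rewrite mulf_neq0.
have [n pqn] : exists n : nat, (p * q).[n%:R] != 0.
  apply: NNPP => nex; apply: pq0; apply: poly_nat_eq0 => n.
  by apply/eqP; apply: contraT => pqn; exfalso; apply: nex; exists n.
by exists n%:R; rewrite -hp -hq -hornerM.
Qed.

Definition line_polyv (g : 'rV[R]_m -> 'rV[R]_m) := forall i, line_poly (fun y => g y 0 i).

Lemma line_polyv_id : line_polyv id.
Proof. by move=> i; apply: line_poly_coord. Qed.

Lemma line_polyv_const v : line_polyv (fun _ => v).
Proof. by move=> i; apply: line_poly_const. Qed.

Variable c : coeffs m.

Lemma line_poly_trilin phi1 phi2 phi3 : line_polyv phi1 -> line_polyv phi2 -> line_polyv phi3 ->
  line_poly (fun y => trilin c (phi1 y) (phi2 y) (phi3 y)).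
Proof.
move=> p1 p2 p3; apply: line_poly_sum => i; apply: line_poly_sum => j.
apply: line_poly_sum => k.
by do 3! apply: line_polyM => //; apply: line_poly_const.
Qed.

Lemma line_poly_polar phi1 phi2 phi3 : line_polyv phi1 -> line_polyv phi2 -> line_polyv phi3 ->
  line_poly (fun y => polar c (phi1 y) (phi2 y) (phi3 y)).
Proof.
move=> p1 p2 p3; apply: line_polyM; last exact: line_poly_const.
by repeat apply: line_polyD; apply: line_poly_trilin.
Qed.

End LinePoly.

Section FormsLinePoly.
Variables (R : numFieldType) (m : nat) (c : coeffs m).
Implicit Types (P Q : 'rV[R]_m).

Lemma line_poly_polarPQ P Q : line_poly (polar c P Q).
Proof. by apply: line_poly_polar; [apply: line_polyv_const.. | apply: line_polyv_id]. Qed.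

Lemma line_poly_lform Q : line_poly (lform c Q).
Proof.
apply: line_polyM; first exact: line_poly_const.
by apply: line_poly_polar; [apply: line_polyv_const.. | apply: line_polyv_id].
Qed.

Lemma line_poly_qform P : line_poly (qform c P).
Proof.
apply: line_polyM; first exact: line_poly_const.
by apply: line_poly_polar; [apply: line_polyv_const | apply: line_polyv_id..].
Qed.

Lemma line_poly_Eform P Q : line_poly (Eform c P Q).
Proof.
have hQ := line_poly_qform Q; have hP := line_poly_qform P.
have h6 := line_poly_const (6 : R); have h36 := line_poly_const (36 : R).
have hy := line_poly_polar c (@line_polyv_id R m) (@line_polyv_id R m) (@line_polyv_id R m).
apply: line_polyD; first apply: line_polyD.
- by apply: line_polyM; [apply: line_poly_lform | apply: line_polyX].
- by apply/line_polyN/line_polyM => //; do 2! apply: line_polyM => //; apply: line_poly_polarPQ.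
- by do 2! apply: line_polyM => //; apply/line_polyX/line_poly_polarPQ.
Qed.

End FormsLinePoly.

(* By induction on the number k of leading coordinates of z that may be
   irrational: with the others fixed, h is a polynomial in coordinate k that
   vanishes at every rational value. *)
Lemma line_poly_rat_eq0 m (h : 'rV[algC]_m -> algC) : line_poly h ->
  (forall S : 'rV[rat]_m, h (toC S) = 0) -> forall z, h z = 0.
Proof.
move=> hh h0.
suff rat_tail k (z : 'rV[algC]_m) :
    (forall i : 'I_m, (k <= i)%N -> exists r, z 0 i = ratr r) -> h z = 0.
  by move=> z; apply: (rat_tail m) => i; rewrite leqNgt ltn_ord.
elim: k z => [|k IH] z hz.
  have [f hf] := fin_all_exists (fun i : 'I_m => hz i isT).
  have -> : z = toC (\row_i f i) by apply/rowP => i; rewrite !mxE hf.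
  exact: h0.
have [km|] := ltnP k m; last first.
  by move=> mk; apply: IH => i ki; have := leq_trans mk ki; rewrite leqNgt ltn_ord.
pose ik := Ordinal km; pose z' := z - z 0 ik *: 'e_ik.
have [p hp] := hh z' 'e_ik.
have z'Q r : h (z' + ratr r *: 'e_ik) = 0.
  apply: IH => i ki; rewrite !mxE eqxx /=.
  have [->|ne] := eqVneq i ik; first by exists r; rewrite /=; ring.
  rewrite !mulr0 subr0 addr0; apply: hz.
  by rewrite ltn_neqAle ki andbT; apply: contra ne => /eqP eki; apply/eqP/val_inj.
have p0 : p = 0 by apply: poly_nat_eq0 => n; rewrite hp -(ratr_nat algC n) z'Q.
by rewrite -[z](subrK (z 0 ik *: 'e_ik)) -/z' -hp p0 horner0.
Qed.

(* Transport along the projection onto T_P X parallel to e, which is linear and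
   defined over Q. *)
Lemma tangent_rat_eq0 m (c : coeffs m) (P e : 'rV[rat]_m) (h : 'rV[algC]_m -> algC) :
  polar c P P e != 0 -> line_poly h ->
  (forall S, polar c P P S = 0 -> h (toC S) = 0) ->
  forall z, polar c (toC P) (toC P) z = 0 -> h z = 0.
Proof.
move=> Pe hh h0.
pose proj z := z - (polar c (toC P) (toC P) z / polar c (toC P) (toC P) (toC e)) *: toC e.
have proj_lin a d t : proj (a + t *: d) = proj a + t *: proj d.
  by rewrite /proj polarD3 polarZ3; apply/rowP => i; rewrite !mxE; ring.
have proj_rat S : proj (toC S) = toC (S - (polar c P P S / polar c P P e) *: e).
  by rewrite /proj toCB toCZ !polar_toC [in RHS]fmorph_div.
have hproj z : h (proj z) = 0.
  apply: (line_poly_rat_eq0 (line_poly_comp hh proj_lin)) => S /=.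
  by rewrite proj_rat h0 // polarB3 polarZ3 divfK ?subrr.
by move=> z Pz; rewrite -(hproj z) /proj Pz mul0r scale0r subr0.
Qed.

Section TangentHyperplane.
Variables (R : numFieldType) (m : nat) (c : coeffs m).
Local Notation polar := (polar c).
Implicit Types (P Q y v z : 'rV[R]_m).

Lemma tangent_mul_neq0 P f g a b : line_poly f -> line_poly g ->
  polar P P a = 0 -> polar P P b = 0 -> f a != 0 -> g b != 0 ->
  exists2 z, polar P P z = 0 & f z * g z != 0.
Proof.
move=> hf hg Pa Pb fa gb; have [t ht] := line_poly_mul_neq0 hf hg fa gb.
by exists (a + t *: (b - a)) => //; rewrite polarD3 polarZ3 polarB3 Pa Pb subrr mulr0 addr0.
Qed.

Lemma lform_qform_eq0 P Q y : polar P Q y = 0 -> Eform c P Q y = 0 ->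
  lform c Q y * qform c P y = 0.
Proof.
move=> PQy; rewrite (_ : Eform c P Q y = lform c Q y * qform c P y * qform c P y).
  by move/eqP; rewrite mulf_eq0 => /orP [] /eqP // ->; rewrite mulr0.
by rewrite /Eform PQy; ring.
Qed.

Lemma Eform_eq0_tangent P Q z1 :
  polar P P z1 = 0 -> lform c Q z1 * qform c P z1 != 0 ->
  (forall z, polar P P z = 0 -> lform c Q z * qform c P z * Eform c P Q z = 0) ->
  forall z, polar P P z = 0 -> Eform c P Q z = 0.
Proof.
move=> Pz1 lq1 lqE z Pz; apply/eqP; apply: contraT => Ez.
have [y Py] := tangent_mul_neq0 (line_polyM (line_poly_lform c Q) (line_poly_qform c P))
  (line_poly_Eform c P Q) Pz1 Pz lq1 Ez.
by rewrite lqE ?eqxx.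
Qed.

Lemma xpoint_tangent_sub P Q : (forall z, polar P P z = 0 -> Eform c P Q z = 0) ->
  forall y v, polar P P y = 0 -> polar P P v = 0 ->
  polar (xpoint c P Q y) (xpoint c P Q y) v = 0.
Proof.
move=> E0 y v Py Pv.
have Ek k : Eform c P Q (y + k *: v) = 0 by apply: E0; rewrite polarD3 polarZ3 Py Pv mulr0 addr0.
have := xpoint_polar c P Q y v; rewrite !Ek Pv !(mulr0, addr0, subr0, mul0r).
by move/eqP; rewrite mulf_eq0 pnatr_eq0 => /eqP.
Qed.

Lemma xpoint_line P Q y1 y2 : polar P Q y1 = 0 -> lform c Q y1 * qform c P y1 = 0 ->
  exists A0 A1 A2, exists a b : R,
    (forall t, xpoint c P Q (y2 + t *: y1) = A0 + t *: A1 + t ^+ 2 *: A2) /\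
    A1 = a *: P + b *: Q + (36 * polar P Q y2 ^+ 2) *: y1.
Proof.
move=> PQ1 lq1.
exists (xpoint c P Q y2).
exists ((4 * lform c Q y2 * (3 * polar P y2 y1) + 2 * lform c Q y1 * qform c P y2
   - 12 * polar P Q y2 * (3 * polar Q y2 y1)) *: P
  + (- 12 * polar P Q y2 * (3 * polar P y2 y1)) *: Q + (36 * polar P Q y2 ^+ 2) *: y1).
exists ((2 * lform c Q y2 * qform c P y1 + 4 * lform c Q y1 * (3 * polar P y2 y1)
   - 6 * polar P Q y2 * qform c Q y1) *: P + (- 6 * polar P Q y2 * qform c P y1) *: Q).
do 2 eexists; split; last by [].
move=> t; rewrite -[RHS]addr0 -(scale0r P) -(mulr0 (t ^+ 3 * 2)) -lq1.
rewrite /xpoint lform_shift polar_shift !qform_shift PQ1.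
by apply/rowP => i; rewrite !mxE; ring.
Qed.

End TangentHyperplane.

Section QuadraticFamily.
Variables (R : numFieldType) (m : nat) (c : coeffs m).
Local Notation polar := (polar c).
Implicit Types (A v : 'rV[R]_m).

Definition family_coefs A0 A1 A2 v : seq R :=
  [:: 3 * polar A0 A0 v; 6 * polar A0 A1 v; 6 * polar A0 A2 v + 3 * polar A1 A1 v;
      6 * polar A1 A2 v; 3 * polar A2 A2 v].

Definition family_poly A0 A1 A2 v : {poly R} :=
  \poly_(i < 5) (family_coefs A0 A1 A2 v)`_i.

Lemma horner_family_poly A0 A1 A2 v t : (family_poly A0 A1 A2 v).[t] =
  3 * polar (A0 + t *: A1 + t ^+ 2 *: A2) (A0 + t *: A1 + t ^+ 2 *: A2) v.
Proof.
rewrite horner_poly !big_ord_recl big_ord0 /=.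
rewrite !(polarD1, polarD2, polarZ1, polarZ2) (polarC12 c A1 A0 v) (polarC12 c A2 A0 v).
by rewrite (polarC12 c A2 A1 v) /bump /=; ring.
Qed.

Lemma coef_family_poly A0 A1 A2 v k :
  (family_poly A0 A1 A2 v)`_k = (family_coefs A0 A1 A2 v)`_k.
Proof. by rewrite coef_poly; case: ltnP => // k5; rewrite nth_default. Qed.

End QuadraticFamily.

Section Smooth.
Variables (m : nat) (c : coeffs m).
Local Notation polar := (polar c).
Hypothesis smooth_c : smooth c.
Implicit Types (P w x A : 'rV[algC]_m).

(* Since T_P X and w span the whole space, such an x would be a singular point. *)
Lemma smooth_polar_neq0 P w x : polar P P w != 0 -> x != 0 ->
  (forall v, polar P P v = 0 -> polar x x v = 0) -> polar x x w != 0.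
Proof.
move=> Pw x0 hv; apply/eqP => hw; have [l /eqP] := smooth_c x0; apply.
pose mu := polar P P 'e_l / polar P P w.
rewrite gradF_delta (_ : 'e_l = ('e_l - mu *: w) + mu *: w); last by rewrite subrK.
rewrite polarD3 polarZ3 hw mulr0 addr0 hv ?mulr0 //.
by rewrite polarB3 polarZ3 /mu divfK // subrr.
Qed.

Lemma quadratic_family_contra P w A0 A1 A2 : polar P P w != 0 -> A1 != 0 ->
  (forall t, A0 + t *: A1 + t ^+ 2 *: A2 != 0) ->
  (forall t v, polar P P v = 0 ->
     polar (A0 + t *: A1 + t ^+ 2 *: A2) (A0 + t *: A1 + t ^+ 2 *: A2) v = 0) ->
  False.
Proof.
move=> Pw A1nz Anz hA.
have tangent0 v : polar P P v = 0 -> family_poly c A0 A1 A2 v = 0.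
  by move=> Pv; apply: poly_nat_eq0 => n; rewrite horner_family_poly hA ?mulr0.
have coef_eq0 k v : polar P P v = 0 -> (family_coefs c A0 A1 A2 v)`_k = 0.
  by move=> /tangent0 Pv; rewrite -coef_family_poly Pv coef0.
have [/eqP size1|] := eqVneq (size (family_poly c A0 A1 A2 w)) 1; last first.
  move=> /closed_rootP [t]; rewrite /root horner_family_poly mulf_eq0 pnatr_eq0 /=.
  by apply/negP; apply: (smooth_polar_neq0 Pw) => // v /hA; apply.
have coefw k : (0 < k)%N -> (family_poly c A0 A1 A2 w)`_k = 0.
  by move=> k0; rewrite nth_default // (eqP size1).
(* A constant family polynomial: its leading coefficient exhibits a singular point. *)
have [A2_0|A2nz] := eqVneq A2 0.
  have hv v : polar P P v = 0 -> polar A1 A1 v = 0.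
    move=> /(coef_eq0 2%N); rewrite /= A2_0 polar0_2 mulr0 add0r.
    by move/eqP; rewrite mulf_eq0 pnatr_eq0 => /eqP.
  have /eqP hw : polar A1 A1 w == 0.
    have := coefw 2%N isT; rewrite coef_family_poly /= A2_0 polar0_2 mulr0 add0r.
    by move/eqP; rewrite mulf_eq0 pnatr_eq0.
  by have := smooth_polar_neq0 Pw A1nz hv; rewrite hw eqxx.
have hv v : polar P P v = 0 -> polar A2 A2 v = 0.
  by move=> /(coef_eq0 4%N) /eqP; rewrite /= mulf_eq0 pnatr_eq0 => /eqP.
have /eqP hw : polar A2 A2 w == 0.
  by have := coefw 4%N isT; rewrite coef_family_poly /= => /eqP; rewrite mulf_eq0 pnatr_eq0.
by have := smooth_polar_neq0 Pw A2nz hv; rewrite hw eqxx.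
Qed.

Lemma tangent_cone_contra P Q w y1 y2 : polar P P w != 0 ->
  polar P P Q = 0 -> polar Q Q P = 0 ->
  (forall z, polar P P z = 0 -> Eform c P Q z = 0) ->
  polar P P y1 = 0 -> polar P Q y1 = 0 ->
  (forall a b k : algC, k != 0 -> a *: P + b *: Q + k *: y1 != 0) ->
  polar P P y2 = 0 -> polar P Q y2 != 0 -> False.
Proof.
move=> Pw PQ QP E0 Py1 PQy1 indep Py2 PQy2.
have lq1 := lform_qform_eq0 PQy1 (E0 y1 Py1).
have [A0 [A1 [A2 [a [b [hA hA1]]]]]] := xpoint_line y2 PQy1 lq1.
apply: (@quadratic_family_contra P w A0 A1 A2 Pw).
- by rewrite hA1 indep // mulf_neq0 ?expf_neq0 // pnatr_eq0.
- move=> t; rewrite -hA; apply/eqP => X0.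
  have := polar_xpoint (y2 + t *: y1) PQ QP.
  rewrite X0 polar0_3 polar_shift PQy1 mulr0 addr0 => /esym/eqP.
  by rewrite mulf_eq0 pnatr_eq0 expf_eq0 (negbTE PQy2) andbF.
- move=> t v Pv; rewrite -hA; apply: xpoint_tangent_sub E0 _ v _ Pv.
  by rewrite polarD3 polarZ3 Py1 Py2 mulr0 addr0.
Qed.

End Smooth.

Section RationalForms.
Variables (m : nat) (c : coeffs m).
Implicit Types (P Q y : 'rV[rat]_m).

Lemma lform_toC Q y : lform c (toC Q) (toC y) = ratr (lform c Q y).
Proof. by rewrite /lform polar_toC (rmorphM _ 3) rmorph_nat. Qed.

Lemma qform_toC P y : qform c (toC P) (toC y) = ratr (qform c P y).
Proof. by rewrite /qform polar_toC (rmorphM _ 3) rmorph_nat. Qed.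

Lemma Eform_toC P Q y : Eform c (toC P) (toC Q) (toC y) = ratr (Eform c P Q y).
Proof.
rewrite /Eform !lform_toC !qform_toC !polar_toC.
(* Generalizing the atoms keeps the morphism rewrites from unfolding them. *)
move: (lform c Q y) (qform c P y) (qform c Q y) (polar c P Q y) (polar c y y y) => l p q t f.
by rewrite rmorphD rmorphB !rmorphM (rmorph_nat _ 6) (rmorph_nat _ 36).
Qed.

(* Two linear conditions leave a space of dimension at least m - 2 > 2, which
   cannot lie in the span of P and Q. *)
Lemma exists_tangent_indep P Q : (5 <= m)%N ->
  exists y, [/\ polar c P P y = 0, polar c P Q y = 0 &
    forall a b k : algC, k != 0 -> a *: toC P + b *: toC Q + k *: toC y != 0].
Proof.
move=> m5.
pose G : 'M[rat]_(m, 2) := \matrix_(i, k)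
  (if k == 0 then polar c P P 'e_i else polar c P Q 'e_i).
have GE x k : (x *m G) 0 k = if k == 0 then polar c P P x else polar c P Q x.
  by rewrite mxE; under eq_bigr do rewrite mxE; case: (k == 0); rewrite polar_sum_delta.
pose K := kermx G; pose N := col_mx P Q.
have rK : (m - 2 <= \rank K)%N by rewrite mxrank_ker leq_sub2l // rank_leq_col.
have /row_subPn [i] : ~~ (K <= N)%MS.
  apply/negP => /mxrankS rKN; have := leq_trans rK (leq_trans rKN (rank_leq_row N)).
  by rewrite leq_subLR; move/(leq_trans m5).
rewrite submxE; set y := row i K => yN.
have yG : y *m G = 0 by rewrite /y -row_mul mulmx_ker row0.
have /andP [PN QN] : (P <= N)%MS && (Q <= N)%MS by rewrite -col_mx_sub submx_refl.
move: PN QN; rewrite !submxE => /eqP PN /eqP QN.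
have [j yj] : exists j, (y *m cokermx N) 0 j != 0.
  apply: NNPP => nex; move/eqP: yN; apply; apply/rowP => j; rewrite !mxE.
  by apply/eqP; apply: contraT => hj; exfalso; apply: nex; exists j; rewrite mxE.
exists y; split.
- by have := GE y 0; rewrite yG mxE eqxx.
- by have := GE y 1; rewrite yG mxE.
move=> a b k k0; apply/eqP => /(congr1 (fun x => (x *m map_mx ratr (cokermx N)) 0 j)).
rewrite !mulmxDl -!scalemxAl /toC -!map_mxM PN QN !map_mx0 mul0mx !scaler0 !add0r !mxE.
by move/eqP; rewrite mulf_eq0 (negbTE k0) fmorph_eq0; move: yj; rewrite mxE => /negbTE ->.
Qed.

Lemma exists_lform_neq0 P Q : smooth c -> Q != 0 -> ~ (tangent c Q =1 tangent c P) ->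
  exists2 S, polar c P P S = 0 & lform c Q S != 0.
Proof.
move=> sm Q0 /not_all_ex_not [x]; rewrite !tangent_polar.
have l3 y : (lform c Q y != 0) = (polar c Q Q y != 0) by rewrite /lform mulf_eq0 pnatr_eq0.
case: (eqVneq (polar c P P x) 0) => [Px|Px]; case: (eqVneq (polar c Q Q x) 0) => [Qx|Qx] // _.
  by exists x; rewrite ?l3.
have [j Qj] := smooth_polar_rat sm Q0.
pose mu := polar c P P 'e_j / polar c P P x.
exists ('e_j - mu *: x); first by rewrite polarB3 polarZ3 /mu divfK // subrr.
by rewrite l3 polarB3 polarZ3 Qx mulr0 subr0.
Qed.

(* If q_P vanished on T_P X, then X_P would be a cone with vertex P. *)
Lemma exists_qform_neq0 P : cubF c P = 0 -> ~ eckardt c P ->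
  exists2 z, polar c (toC P) (toC P) z = 0 & qform c (toC P) z != 0.
Proof.
move=> FP nE; apply: NNPP => noz; apply: nE => z _ Fz; rewrite !tangent_polar => /eqP Pz a b.
have FPC : polar c (toC P) (toC P) (toC P) = 0 by rewrite polar_toC -cubF_polar FP rmorph0.
have /eqP qz : qform c (toC P) z == 0 by apply: contraT => qz; case: noz; exists z.
split; last by rewrite tangent_polar polar_comb3 FPC Pz !mulr0 addr0.
move: Fz; rewrite !cubF_polar polar_comb_cube FPC Pz => ->.
move: qz; rewrite /qform => /eqP; rewrite mulf_eq0 pnatr_eq0 /= => /eqP ->.
by rewrite !mulr0 !addr0.
Qed.

End RationalForms.

Section Span.
Variables (m : nat) (c : coeffs m).
Local Notation polar := (polar c).
Implicit Types (P Q A B S : 'rV[rat]_m).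

Lemma polar_indep A B : B != 0 -> polar B B B = 0 -> polar B B A != 0 ->
  forall a b : rat, a *: A + b *: B = 0 -> a = 0 /\ b = 0.
Proof.
move=> B0 FB BA a b e.
have : polar B B (a *: A + b *: B) = 0 by rewrite e polar0_3.
rewrite polar_comb3 FB mulr0 addr0 => /eqP; rewrite mulf_eq0 (negbTE BA) orbF => /eqP a0.
split=> //; move: e; rewrite a0 scale0r add0r => /eqP.
by rewrite scaler_eq0 (negbTE B0) orbF => /eqP.
Qed.

Lemma onX_polar A B : polar A A A = 0 -> polar A A B != 0 -> onX c A.
Proof.
move=> FA AB; split; last by rewrite cubF_polar.
by apply: contraNneq AB => ->; rewrite polar0_1.
Qed.

(* The line AB meets X in 2A + B. *)
Lemma span_tangent (T : 'rV[rat]_m -> Prop) A B : Defs.span c T A -> onX c A -> onX c B ->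
  polar A A B = 0 -> polar B B A != 0 -> Defs.span c T B.
Proof.
move=> sA [A0 FA] hB AB BA; have [B0 FB] := hB; move: FA FB; rewrite !cubF_polar => FA FB.
apply: (span_step sA sA hB); exists A, B; split; first exact: polar_indep B0 FB BA.
exists 1, 0, 1, 0, 0, 1, (3 * polar B B A); split.
- by exists 1; rewrite oner_neq0 scale1r scale0r addr0 scale1r.
- by exists 1; rewrite oner_neq0 scale1r scale0r addr0 scale1r.
- by exists 1; rewrite oner_neq0 scale1r scale0r add0r scale1r.
- by rewrite mulf_neq0 // pnatr_eq0.
move=> a b; rewrite cubF_polar polar_comb_cube FA FB AB (polarC13 c A B B); ring.
Qed.

Lemma span_self P : spanP c P P.
Proof. by apply: span_base; exists 1; rewrite oner_neq0 scale1r. Qed.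

(* Both [thirdP] and [thirdQ] are reached from P along tangent lines, and Q is
   the third point of X on the line through them. *)
Lemma span_Eform_neq0 P Q S : onX c P -> onX c Q ->
  polar P P Q = 0 -> polar Q Q P = 0 -> polar P P S = 0 ->
  lform c Q S * qform c P S * Eform c P Q S != 0 -> spanP c P Q.
Proof.
move=> hP hQ PQ QP PS nz; have [P0 FP] := hP; have [Q0 FQ] := hQ.
move: FP FQ; rewrite !cubF_polar => FP FQ.
have [/andP [qS lS] _] : (qform c P S != 0) && (lform c Q S != 0) /\ True.
  by move: nz; rewrite !mulf_eq0 !negb_or => /andP [/andP [-> ->]].
pose A := thirdP c P S; pose B := thirdQ c P Q S.
have AP : polar A A P != 0.
  have := thirdP_polarP FP PS; rewrite -/A => e.
  by apply: contraNneq qS => A0; move: e; rewrite A0 mulr0 => /esym/eqP; rewrite expf_eq0.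
have BP : polar B B P != 0.
  have := thirdQ_polarP FP PQ QP PS; rewrite -/B => e.
  by apply: contraNneq nz => B0; rewrite (mulrC (lform c Q S)) -e B0 mulr0.
have sA := span_tangent (span_self P) hP (onX_polar (thirdP_cube FP PS) AP)
  (thirdP_tangent FP PS) AP.
have sB := span_tangent (span_self P) hP (onX_polar (thirdQ_cube FP FQ PQ QP PS) BP)
  (thirdQ_tangent FP PQ PS) BP.
apply: (span_step sA sB hQ); exists A, Q; split.
  apply: polar_indep => //.
  have : lform c Q A != 0 by rewrite lform_thirdP // mulf_neq0.
  by rewrite /lform mulf_eq0 negb_or => /andP [].
exists 1, 0, (lform c Q S), (- kform c P Q S), 0, 1, (qform c P S); split => //.
- by exists 1; rewrite oner_neq0 scale1r scale0r addr0 scale1r.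
- by exists 1; rewrite oner_neq0 scale1r.
- by exists 1; rewrite oner_neq0 scale1r scale0r add0r scale1r.
by move=> a b; rewrite cubF_polar thirdP_thirdQ_cube //; ring.
Qed.

End Span.

Lemma exists_Eform_neq0 n (c : coeffs n.+2) (P Q : 'rV[rat]_n.+2) :
  (3 <= n)%N -> smooth c -> onX c P -> ~ eckardt c P -> onX c Q ->
  polar c P P Q = 0 -> polar c Q Q P = 0 -> ~ (tangent c Q =1 tangent c P) ->
  exists2 S, polar c P P S = 0 & lform c Q S * qform c P S * Eform c P Q S != 0.
Proof.
move=> n3 sm [P0 FP] nE [Q0 _] PQ QP nT; apply: NNPP => noS.
have [j Pj] := smooth_polar_rat sm P0.
have [S1 PS1 lS1] := exists_lform_neq0 sm Q0 nT.
have [z0 Pz0 qz0] := exists_qform_neq0 FP nE.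
have [y1 [Py1 PQy1 indep]] := exists_tangent_indep c P Q (n3 : (5 <= n.+2)%N).
pose PC := toC P; pose QC := toC Q.
have toC0 x y z : polar c x y z = 0 -> polar c (toC x) (toC y) (toC z) = 0.
  by move=> e; rewrite polar_toC e rmorph0.
have PjC : polar c PC PC (toC 'e_j) != 0 by rewrite polar_toC fmorph_eq0.
have lqE0 : forall z, polar c PC PC z = 0 ->
    lform c QC z * qform c PC z * Eform c PC QC z = 0.
  apply: (tangent_rat_eq0 Pj).
    apply: line_polyM; last exact: line_poly_Eform.
    by apply: line_polyM; [apply: line_poly_lform | apply: line_poly_qform].
  move=> S PS; rewrite lform_toC qform_toC Eform_toC -!rmorphM.
  by apply/eqP; rewrite fmorph_eq0; apply: contraT => nz; case: noS; exists S.
have lS1C : lform c QC (toC S1) != 0 by rewrite lform_toC fmorph_eq0.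
have [z1 Pz1 lqz1] := tangent_mul_neq0 (line_poly_lform c QC) (line_poly_qform c PC)
  (toC0 _ _ _ PS1) Pz0 lS1C qz0.
have E0 := Eform_eq0_tangent Pz1 lqz1 lqE0.
apply: (tangent_cone_contra sm PjC (toC0 _ _ _ PQ) (toC0 _ _ _ QP) E0
  (toC0 _ _ _ Py1) (toC0 _ _ _ PQy1) indep Pz1).
by apply: contra_neq lqz1 => PQz1; apply: lform_qform_eq0 PQz1 (E0 _ Pz1).
Qed.

Unset Implicit Arguments.

Theorem lemma5p4 (n : nat) (c : coeffs n.+2) (P Q : 'rV[rat]_n.+2) :
  (3 <= n)%N -> smooth c ->
  onX c P -> ~ eckardt c P ->
  onX c Q -> tangent c P Q -> ~ (tangent c Q =1 tangent c P) ->
  spanP c P Q.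
Proof.
move=> n3 sm hP nE hQ; rewrite tangent_polar => /eqP PQ nT.
have [QP|QP] := eqVneq (polar c Q Q P) 0.
  have [S PS nz] := exists_Eform_neq0 n3 sm hP nE hQ PQ QP nT.
  exact: span_Eform_neq0 hP hQ PQ QP PS nz.
exact: span_tangent (span_self c P) hP hQ PQ QP.
Qed.
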